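(* A hypersemigroup $(H,\circ)$ is intra-regular if and only if for every right ideal $X$, every left ideal $Y$ and every bi-ideal $B$ of $H$ we have $X\cap B\cap Y\subseteq Y*B*X$.
   Context: Let $H$ be a nonempty set and $\mathcal{P}^*(H)$ the set of all nonempty subsets of $H$. A hyperoperation on $H$ is a map $\circ: H\times H\to \mathcal{P}^*(H)$; the pair $(H,\circ)$ is a hypergroupoid. For $A,B\in\mathcal{P}^*(H)$ define $A*B:=\bigcup_{(a,b)\in A\times B}(a\circ b)$. A hypergroupoid is a hypersemigroup if $\{x\}*(y\circ z)=(x\circ y)*\{z\}$ for all $x,y,z\in H$; then $*$ is associative on $\mathcal{P}^*(H)$. A hypersemigroup is intra-regular if for every $a\in H$ there exist $x,y\in H$ with $a\in\{x\}*\{a\}*\{a\}*\{y\}$. A nonempty subset $A$ of $H$ is a left ideal if $H*A\subseteq A$ and a right ideal if $A*H\subseteq A$. A nonempty subset $B$ of $H$ is a bi-ideal if $B*H*B\subseteq B$. *)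

From Stdlib Require Import Classical.


(* A hyperoperation: o a b is the (nonempty) subset a∘b of H, as a predicate. *)
Definition is_hyperoperation {H : Type} (o : H -> H -> H -> Prop) : Prop :=
  forall a b : H, exists c, o a b c.

Definition hprod {H : Type} (o : H -> H -> H -> Prop) (A B : H -> Prop) : H -> Prop :=
  fun c => exists a b, A a /\ B b /\ o a b c.

Definition sing {H : Type} (x : H) : H -> Prop := fun y => y = x.

Definition incl {H : Type} (A B : H -> Prop) : Prop := forall x, A x -> B x.

Definition nonempty {H : Type} (A : H -> Prop) : Prop := exists x, A x.

Definition full {H : Type} : H -> Prop := fun _ => True.

Definition is_hypersemigroup {H : Type} (o : H -> H -> H -> Prop) : Prop :=
  is_hyperoperation o /\
  forall x y z : H, forall t,
    hprod o (sing x) (o y z) t <-> hprod o (o x y) (sing z) t.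

Definition intra_regular {H : Type} (o : H -> H -> H -> Prop) : Prop :=
  forall a : H, exists x y : H,
    hprod o (hprod o (hprod o (sing x) (sing a)) (sing a)) (sing y) a.

Definition left_ideal {H : Type} (o : H -> H -> H -> Prop) (A : H -> Prop) : Prop :=
  nonempty A /\ incl (hprod o full A) A.

Definition right_ideal {H : Type} (o : H -> H -> H -> Prop) (A : H -> Prop) : Prop :=
  nonempty A /\ incl (hprod o A full) A.

Definition bi_ideal {H : Type} (o : H -> H -> H -> Prop) (B : H -> Prop) : Prop :=
  nonempty B /\ incl (hprod o (hprod o B full) B) B.

(* If a ∈ x a a y, substituting x a a y for the two middle copies of a and
   regrouping gives a ∈ (x x a)(a (y x) a)(a (y y)) ⊆ Y B X.  Conversely, take
   for X = B the principal right ideal {a} ∪ aH and for Y the principal left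
   ideal {a} ∪ Ha: then a ∈ Y X X ⊆ Y (aH), so either a ∈ (Ha)(aH), which is
   intra-regularity at a, or a ∈ a a H; in the latter case substituting a a H
   for the second a gives a ∈ a (a a H) H ⊆ (H a)(a H). *)

From Stdlib Require Import FunctionalExtensionality PropExtensionality.

Section Hypersemigroup.

Variable H : Type.
Variable o : H -> H -> H -> Prop.
Local Infix "**" := (hprod o) (at level 40, left associativity).

Lemma incl_refl (A : H -> Prop) : incl A A.
Proof. unfold incl; auto. Qed.

Lemma incl_trans (A B C : H -> Prop) : incl A B -> incl B C -> incl A C.
Proof. unfold incl; auto. Qed.

Lemma incl_full (A : H -> Prop) : incl A full.
Proof. unfold incl, full; auto. Qed.

Lemma sing_incl (A : H -> Prop) (a : H) : A a -> incl (sing a) A.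
Proof. unfold incl, sing; intros Aa x ->; exact Aa. Qed.

Lemma hprod_mono (A A' B B' : H -> Prop) :
  incl A A' -> incl B B' -> incl (A ** B) (A' ** B').
Proof.
  unfold incl, hprod; intros HA HB t (a & b & Aa & Bb & Ht).
  exists a, b; auto.
Qed.

Hypothesis Ho : is_hypersemigroup o.

Lemma hprod_assoc (A B C : H -> Prop) : A ** B ** C = A ** (B ** C).
Proof.
  destruct Ho as [_ Hassoc].
  apply functional_extensionality; intro t; apply propositional_extensionality.
  unfold hprod; split.
  - intros (u & c & (a & b & Aa & Bb & Hu) & Cc & Ht).
    assert (Habc : hprod o (o a b) (sing c) t) by (exists u, c; unfold sing; auto).
    apply Hassoc in Habc as (a' & v & -> & Hv & Ht').
    exists a, v; repeat split; auto.
    exists b, c; auto.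
  - intros (a & v & Aa & (b & c & Bb & Cc & Hv) & Ht).
    assert (Habc : hprod o (sing a) (o b c) t) by (exists a, v; unfold sing; auto).
    apply Hassoc in Habc as (u & c' & Hu & -> & Ht').
    exists u, c; repeat split; auto.
    exists a, b; auto.
Qed.

Lemma intra_regular_mem_ideal_product (X Y B : H -> Prop) (a x y : H) :
  right_ideal o X -> left_ideal o Y -> bi_ideal o B -> X a -> B a -> Y a ->
  (sing x ** sing a ** sing a ** sing y) a -> (Y ** B ** X) a.
Proof.
  intros [_ HX] [_ HY] [_ HB] Xa Ba Ya Ha.
  set (S := sing x ** sing a ** sing a ** sing y).
  assert (HaS : incl (sing a) S) by (apply sing_incl; exact Ha).
  assert (HaSS : (sing x ** S ** S ** sing y) a).
  { revert Ha; apply hprod_mono; [apply hprod_mono; [apply hprod_mono |] |]; exact HaS || apply incl_refl. }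
  assert (Hregroup : sing x ** S ** S ** sing y =
    sing x ** sing x ** sing a
      ** (sing a ** (sing y ** sing x) ** sing a)
      ** (sing a ** (sing y ** sing y))).
  { unfold S; rewrite !hprod_assoc; reflexivity. }
  rewrite Hregroup in HaSS; revert HaSS.
  apply hprod_mono; [apply hprod_mono |].
  - apply (incl_trans _ (full ** Y)); [| exact HY].
    apply hprod_mono; [apply incl_full | apply sing_incl; exact Ya].
  - apply (incl_trans _ (B ** full ** B)); [| exact HB].
    apply hprod_mono; [apply hprod_mono |]; apply incl_full || (apply sing_incl; exact Ba).
  - apply (incl_trans _ (X ** full)); [| exact HX].
    apply hprod_mono; [apply sing_incl; exact Xa | apply incl_full].
Qed.

Definition principal_right_ideal (a : H) : H -> Prop :=
  fun z => z = a \/ (sing a ** full) z.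

Definition principal_left_ideal (a : H) : H -> Prop :=
  fun z => z = a \/ (full ** sing a) z.

Lemma principal_right_ideal_mulr (a : H) (Z : H -> Prop) :
  incl (principal_right_ideal a ** Z) (sing a ** full).
Proof.
  intros t (u & z & [-> | Hu] & Zz & Ht).
  - exists a, z; unfold sing, full; auto.
  - assert (Haf : (sing a ** full ** Z) t) by (exists u, z; auto).
    rewrite hprod_assoc in Haf; revert Haf.
    apply hprod_mono; [apply incl_refl | apply incl_full].
Qed.

Lemma principal_left_ideal_mull (a : H) (Z : H -> Prop) :
  incl (Z ** principal_left_ideal a) (full ** sing a).
Proof.
  intros t (z & u & Zz & [-> | Hu] & Ht).
  - exists z, a; unfold sing, full; auto.
  - assert (Hfa : (Z ** (full ** sing a)) t) by (exists z, u; auto).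
    rewrite <- hprod_assoc in Hfa; revert Hfa.
    apply hprod_mono; [apply incl_full | apply incl_refl].
Qed.

Lemma principal_right_ideal_right_ideal (a : H) :
  right_ideal o (principal_right_ideal a).
Proof.
  split; [exists a; left; reflexivity |].
  intros t Ht; right; exact (principal_right_ideal_mulr a full t Ht).
Qed.

Lemma principal_left_ideal_left_ideal (a : H) :
  left_ideal o (principal_left_ideal a).
Proof.
  split; [exists a; left; reflexivity |].
  intros t Ht; right; exact (principal_left_ideal_mull a full t Ht).
Qed.

Lemma right_ideal_bi_ideal (X : H -> Prop) : right_ideal o X -> bi_ideal o X.
Proof.
  intros [HXne HX]; split; [exact HXne |].
  apply (incl_trans _ (X ** full)); [| exact HX].
  apply (incl_trans _ (X ** full ** full)).
  - apply hprod_mono; [apply incl_refl | apply incl_full].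
  - apply hprod_mono; [exact HX | apply incl_refl].
Qed.

Lemma mem_two_sided_of_mem_sq_full (a : H) :
  (sing a ** sing a ** full) a -> (full ** sing a ** sing a ** full) a.
Proof.
  intros Ha.
  assert (HaS : incl (sing a) (sing a ** sing a ** full)) by (apply sing_incl; exact Ha).
  rewrite hprod_assoc in Ha.
  assert (Ha' : (sing a ** ((sing a ** sing a ** full) ** full)) a).
  { revert Ha; apply hprod_mono; [apply incl_refl |].
    apply hprod_mono; [exact HaS | apply incl_refl]. }
  replace (sing a ** ((sing a ** sing a ** full) ** full))
    with (sing a ** sing a ** sing a ** (full ** full)) in Ha'
    by (rewrite !hprod_assoc; reflexivity).
  revert Ha'; apply hprod_mono; [apply hprod_mono; [apply hprod_mono |] |];
    apply incl_full || apply incl_refl.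
Qed.

Lemma intra_regular_witness (a : H) :
  (full ** sing a ** sing a ** full) a ->
  exists x y, (sing x ** sing a ** sing a ** sing y) a.
Proof.
  intros (u & y & (v & a2 & (x & a1 & _ & -> & Hv) & -> & Hu) & _ & Ha).
  exists x, y.
  exists u, y; unfold sing; repeat split; auto.
  exists v, a; repeat split; auto.
  exists x, a; repeat split; auto.
Qed.

Lemma mem_two_sided_of_ideal_product (a : H) :
  (principal_left_ideal a ** principal_right_ideal a ** principal_right_ideal a) a ->
  (full ** sing a ** sing a ** full) a.
Proof.
  intros Ha; rewrite hprod_assoc in Ha.
  destruct Ha as (y & w & [-> | Hy] & Hw & Ha);
    apply principal_right_ideal_mulr in Hw.
  - apply mem_two_sided_of_mem_sq_full.
    rewrite hprod_assoc; exists a, w; unfold sing; auto.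
  - rewrite (hprod_assoc (full ** sing a)); exists y, w; auto.
Qed.

End Hypersemigroup.

Theorem proposition24 (H : Type) (o : H -> H -> H -> Prop)
  (Ho : is_hypersemigroup o) :
  intra_regular o <->
  (forall X Y B : H -> Prop,
     right_ideal o X -> left_ideal o Y -> bi_ideal o B ->
     incl (fun h => X h /\ B h /\ Y h) (hprod o (hprod o Y B) X)).
Proof.
  split.
  - intros Hreg X Y B HX HY HB a (Xa & Ba & Ya).
    destruct (Hreg a) as (x & y & Ha).
    exact (intra_regular_mem_ideal_product _ _ Ho _ _ _ _ _ _ HX HY HB Xa Ba Ya Ha).
  - intros Hideals a.
    apply intra_regular_witness, mem_two_sided_of_ideal_product; [exact Ho |].
    apply Hideals.
    + apply principal_right_ideal_right_ideal; exact Ho.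
    + apply principal_left_ideal_left_ideal; exact Ho.
    + apply right_ideal_bi_ideal, principal_right_ideal_right_ideal; exact Ho.
    + unfold principal_right_ideal, principal_left_ideal; auto.
Qed.
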